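(* Let $a\ge2$, let $t\ge3$ be odd, and let $F=\breve F(a^t)$, where $a^t$ is the $t$-tuple $(a,\dots,a)$, with $n=\#F$. Then \[ \hat\chi\equiv\frac n2+a\Big(\sum_{p\text{ peak}}\chi_p-\sum_{v\text{ valley}}\chi_v\Big), \] where $\hat\chi=\sum_{q\in F}\hat\chi_q$ is the order ideal cardinality statistic.
   Context: A fence $\breve F(\alpha_1,\dots,\alpha_t)$ ($t\ge2$, positive integers, $\alpha_1,\alpha_t\ge2$) is the poset on $\{x_1,\dots,x_n\}$, $n=\alpha_1+\dots+\alpha_t-1$, with $a_i=\alpha_1+\dots+\alpha_i$, $a_0=0$, whose cover relations are: for $1\le j\le n-1$ with $a_{i-1}\le j<a_i$, $x_j\lessdot x_{j+1}$ if $i$ odd and $x_j\gtrdot x_{j+1}$ if $i$ even. The elements $x_{a_i}$, $i\in[t-1]$, are peaks (cover two elements, $i$ odd) or valleys (covered by two elements, $i$ even). $\mathcal J(F)$ is the set of order ideals. For $q\in F$, $I\in\mathcal J(F)$: $\hat\chi_q(I)=1$ if $q\in I$, else 0; $\chi_q(I)=1$ if $q\in\max(I)$, else 0; $T_q(I)=1$ if $q\in\min(F\setminus I)$, $-1$ if $q\in\max(I)$, $0$ otherwise. $f\equiv g$ means $f-g=\sum_{q\in F}c_qT_q$ for real constants $c_q$; real numbers denote constant functions. *)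

From HB Require Import structures.
From mathcomp Require Import all_boot all_order all_algebra.
From mathcomp Require Import reals.
Set Implicit Arguments. Unset Strict Implicit. Unset Printing Implicit Defensive.
Import Order.TTheory GRing.Theory Num.Theory.
Local Open Scope ring_scope.

(* Fence F(alpha_1,...,alpha_t), alpha given as a sequence al.
   Element x_j (1-based, j in 1..n) is represented by the ordinal j-1 : 'I_n. *)

Definition psum (al : seq nat) (i : nat) : nat := (\sum_(k < i) nth 0%N al k)%N.

Definition fence_n (al : seq nat) : nat := (sumn al).-1.

(* the i with a_{i-1} <= j < a_i *)
Definition fence_block (al : seq nat) (j : nat) : nat :=
  (count (fun k => psum al k <= j)%N (iota 1 (size al))).+1.

Definition fence_cover (al : seq nat) : rel 'I_(fence_n al) :=
  fun u v =>
    ((u.+1 == v :> nat) && odd (fence_block al u.+1))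
    || ((v.+1 == u :> nat) && ~~ odd (fence_block al v.+1)).

Definition fence_le (al : seq nat) (u v : 'I_(fence_n al)) : bool :=
  connect (@fence_cover al) u v.

Definition is_ideal (al : seq nat) (I : {set 'I_(fence_n al)}) : bool :=
  [forall u, forall v, ((v \in I) && fence_le u v) ==> (u \in I)].

Definition is_peak (al : seq nat) (q : 'I_(fence_n al)) : bool :=
  [exists i : 'I_(size al), [&& (0 < i)%N, odd i & (q.+1 == psum al i)%N]].
Definition is_valley (al : seq nat) (q : 'I_(fence_n al)) : bool :=
  [exists i : 'I_(size al), [&& (0 < i)%N, ~~ odd i & (q.+1 == psum al i)%N]].

Definition in_max (al : seq nat) (I : {set 'I_(fence_n al)}) (q : 'I_(fence_n al)) : bool :=
  (q \in I) && [forall y, ((y \in I) && (y != q)) ==> ~~ fence_le q y].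
Definition in_min_compl (al : seq nat) (I : {set 'I_(fence_n al)}) (q : 'I_(fence_n al)) : bool :=
  (q \notin I) && [forall y, ((y \notin I) && (y != q)) ==> ~~ fence_le y q].

Section Stats.
Variable R : realType.
Variable al : seq nat.

Definition chi_hat (q : 'I_(fence_n al)) (I : {set 'I_(fence_n al)}) : R :=
  if q \in I then 1 else 0.
Definition chi (q : 'I_(fence_n al)) (I : {set 'I_(fence_n al)}) : R :=
  if in_max I q then 1 else 0.
Definition toggle (q : 'I_(fence_n al)) (I : {set 'I_(fence_n al)}) : R :=
  if in_min_compl I q then 1 else if in_max I q then -1 else 0.

Definition toggle_equiv (f g : {set 'I_(fence_n al)} -> R) : Prop :=
  exists c : 'I_(fence_n al) -> R,
    forall I, is_ideal I -> f I - g I = \sum_q c q * toggle q I.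
End Stats.

From HB Require Import structures.
From mathcomp Require Import all_boot all_order all_algebra.
From mathcomp Require Import reals.
From mathcomp Require Import ring zify.
Set Implicit Arguments. Unset Strict Implicit. Unset Printing Implicit Defensive.
Import Order.TTheory GRing.Theory Num.Theory.

(* Write b_k for the membership of x_k in the ideal, padded with b_0 = 1 and
   b_(n+1) = 0, and put d_k = r (r - a) / 2 with r = k mod a.  As all blocks have
   length a, the peaks and valleys are the x_k with a | k, where d_k = 0; elsewhere
   T_(x_k) is the second difference b_(k-1) - 2 b_k + b_(k+1), while chi_p = b_p at a
   peak and chi_v + T_v = 1 - b_v at a valley.  Hence, with c_(x_k) = d_k - a [x_k is
   a valley], the k-th summand of chi_hat - RHS - sum_q c_q T_q is
   b_k (1 - a [a | k]) - d_k (b_(k-1) - 2 b_k + b_(k+1)) + a [x_k is a valley].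
   Summation by parts moves the second difference onto d, whose second difference is
   exactly 1 - a [a | k]; what survives is the boundary term -d_1 = (a - 1) / 2 plus
   a times the (t - 1) / 2 valleys, that is n / 2. *)

Lemma count_iota_leq (m s : nat) : count (fun k => k <= m) (iota 1 s) = minn s m.
Proof.
elim: s => [|s IH]; first by rewrite min0n.
by rewrite -[s.+1]addn1 iotaD count_cat IH /=; lia.
Qed.

Lemma odd_divnS (a k : nat) : 0 < a -> odd (k.+1 %/ a) = (a %| k.+1) (+) odd (k %/ a).
Proof. by move=> a_gt0; rewrite divnS // oddD oddb. Qed.

Lemma sum_even_multiples (a m : nat) : 0 < a ->
  \sum_(k < m) ((a %| k.+1) && odd (k %/ a)) = (m %/ a)./2.
Proof.
move=> a_gt0; elim: m => [|m IH]; first by rewrite big_ord0 div0n.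
rewrite big_ord_recr /= IH divnS //.
by case: (a %| m.+1); rewrite /= ?addn0 // uphalf_half addnC.
Qed.

Lemma succ_modn_dvd (a k : nat) : 0 < a -> a %| k.+1 -> (k %% a).+1 = a.
Proof.
move=> a_gt0 dvd_k1; apply/eqP; rewrite eqn_leq ltn_mod a_gt0 /=.
apply: dvdn_leq => //; rewrite -(dvdn_addl _ (dvdn_mull (k %/ a) (dvdnn a))).
by rewrite addSn addnC -divn_eq.
Qed.

Section FenceIdeals.
Variable al : seq nat.
Local Notation P := 'I_(fence_n al).
Implicit Types (I : {set P}) (u v q : P).

Lemma fence_cover_neq u v : fence_cover u v -> u != v.
Proof. by rewrite /fence_cover; apply: contraTneq => ->; rewrite !(gtn_eqF (ltnSn _)). Qed.

Lemma ideal_le I u v : is_ideal I -> fence_le u v -> v \in I -> u \in I.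
Proof. by move=> /forallP/(_ u)/forallP/(_ v)/implyP idI uv vI; apply: idI; rewrite vI. Qed.

Lemma ideal_cover I u v : is_ideal I -> fence_cover u v -> v \in I -> u \in I.
Proof. by move=> idI uv; apply: ideal_le; rewrite // /fence_le connect1. Qed.

Lemma in_maxE I q : is_ideal I ->
  in_max I q = (q \in I) && [forall v, fence_cover q v ==> (v \notin I)].
Proof.
move=> idI; rewrite /in_max; case qI: (q \in I) => //=.
apply/forallP/forallP => maxq v.
- apply/implyP => qv; apply/negP => vI.
  by have := maxq v; rewrite vI eq_sym (fence_cover_neq qv) /fence_le connect1.
- apply/implyP => /andP[vI vq]; apply/negP => /connectP[[|w p] /= qp ep].
    by move: vq; rewrite ep eqxx.
  case/andP: qp => qw wp.
  have wI : w \in I by apply: (ideal_le idI) vI; rewrite ep; apply/connectP; exists p.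
  by have := maxq w; rewrite qw wI.
Qed.

Lemma in_min_complE I q : is_ideal I ->
  in_min_compl I q = (q \notin I) && [forall u, fence_cover u q ==> (u \in I)].
Proof.
move=> idI; rewrite /in_min_compl; case qI: (q \in I) => //=.
apply/forallP/forallP => minq u.
- apply/implyP => uq; apply/negPn/negP => uI.
  by have := minq u; rewrite uI (fence_cover_neq uq) /fence_le connect1.
- apply/implyP => /andP[uI uq]; apply/negP => /connectP[p].
  case/lastP: p => [|p w] /=; first by move=> _ qu; move: uq; rewrite qu eqxx.
  rewrite rcons_path last_rcons => /andP[up lw] qw.
  have lI : last u p \in I by apply: (implyP (minq _)); rewrite qw.
  by move/negP: uI; apply; apply: (ideal_le idI) lI; apply/connectP; exists p.
Qed.

(* [pmem I k] says that x_k, i.e. the ordinal k - 1, lies in I; it is padded by a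
   virtual bottom x_0 in I and virtual tops x_k, k > n, outside I. *)
Definition pmem I (k : nat) : bool :=
  if k is k'.+1 then [exists q, (val q == k') && (q \in I)] else true.

Lemma pmem_ord I q : pmem I q.+1 = (q \in I).
Proof.
rewrite /pmem; apply/existsP/idP => [[w /andP[/eqP/val_inj -> //]]|qI].
by exists q; rewrite eqxx.
Qed.

Lemma pmem_out I k : fence_n al <= k -> pmem I k.+1 = false.
Proof.
move=> nk; rewrite /pmem; apply/existsP => -[w /andP[/eqP wk _]].
by have := ltn_ord w; rewrite wk ltnNge nk.
Qed.

End FenceIdeals.

Arguments pmem : simpl never.

Section UniformFence.
Variables a t : nat.
Hypothesis a_gt0 : 0 < a.
Local Notation al := (nseq t a).
Local Notation n := (fence_n al).
Local Notation P := 'I_n.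

Lemma fence_n_nseq : n = (t * a).-1.
Proof. by rewrite /fence_n sumn_nseq mulnC. Qed.

Lemma fence_n_divn : n %/ a = t.-1.
Proof. by rewrite fence_n_nseq divn_pred mulnK // dvdn_mull // subn1. Qed.

Lemma ltn_ord_succ (u : P) : u.+1 < t * a.
Proof. by have := ltn_ord u; move: (val u); rewrite fence_n_nseq; lia. Qed.

Lemma psum_nseq k : k <= t -> psum al k = k * a.
Proof.
move=> kt; rewrite /psum (eq_bigr (fun _ => a)) ?sum_nat_const ?card_ord // => i _.
by rewrite nth_nseq (leq_trans (ltn_ord i) kt).
Qed.

Lemma fence_block_nseq j : j < t * a -> fence_block al j = (j %/ a).+1.
Proof.
move=> jt; rewrite /fence_block size_nseq.
rewrite (@eq_in_count _ _ (fun k => k <= j %/ a)); last first.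
  by move=> k; rewrite mem_iota => /andP[_ kt]; rewrite psum_nseq ?leq_divRL //; lia.
by rewrite count_iota_leq; congr S; apply/minn_idPr; rewrite ltnW // ltn_divLR.
Qed.

Lemma fence_cover_nseq (u v : P) : fence_cover u v =
  ((u.+1 == v :> nat) && ~~ odd (u.+1 %/ a)) || ((v.+1 == u :> nat) && odd (v.+1 %/ a)).
Proof. by rewrite /fence_cover !fence_block_nseq ?ltn_ord_succ //= negbK. Qed.

Lemma turning_point_nseq (p : pred nat) (q : P) :
  [exists i : 'I_(size al), [&& 0 < i, p i & q.+1 == psum al i]] =
  (a %| q.+1) && p (q.+1 %/ a).
Proof.
have qt := ltn_ord_succ q.
apply/existsP/andP => [[i /and3P[i_gt0 pi /eqP qi]]|[dvd_q1 pq]].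
  have it : i <= t by have := ltn_ord i; move: (val i); rewrite size_nseq => k /ltnW.
  by rewrite qi psum_nseq // mulnK //; split=> //; apply: dvdn_mull.
have it : q.+1 %/ a < size al by rewrite size_nseq ltn_divLR.
exists (Ordinal it); rewrite /= psum_nseq ?divnK ?eqxx ?andbT //; last first.
  by apply: ltnW; rewrite ltn_divLR.
by rewrite pq andbT divn_gt0 // dvdn_leq.
Qed.

Lemma is_peak_nseq (q : P) : is_peak q = (a %| q.+1) && ~~ odd (q %/ a).
Proof.
by rewrite /is_peak (turning_point_nseq odd) odd_divnS //; case: (a %| q.+1).
Qed.

Lemma is_valley_nseq (q : P) : is_valley q = (a %| q.+1) && odd (q %/ a).
Proof.
by rewrite /is_valley (turning_point_nseq (fun i => ~~ odd i)) odd_divnS //;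
  case: (a %| q.+1) => //=; case: (odd _).
Qed.

Hypothesis t_odd : odd t.

Lemma odd_fence_n_divn : odd (n %/ a) = false.
Proof. by rewrite fence_n_divn; case: t t_odd => //= s /negPf. Qed.

Section Ideal.
Variable I : {set P}.
Hypothesis idI : is_ideal I.

Lemma pmem_rise k : ~~ odd (k %/ a) -> pmem I k.+1 -> pmem I k.
Proof.
case: k => // k; case: (ltnP k.+1 n) => [kn|nk]; last by rewrite pmem_out.
have k_lt_n : k < n by apply: ltnW.
move=> rise; rewrite (pmem_ord I (Ordinal kn)) (pmem_ord I (Ordinal k_lt_n)).
by apply: ideal_cover; rewrite // fence_cover_nseq /= eqxx rise.
Qed.

Lemma pmem_fall k : odd (k %/ a) -> pmem I k -> pmem I k.+1.
Proof.
case: k => [|k]; first by rewrite div0n.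
case: (ltnP k.+1 n) => [kn|nk]; last first.
  case: (ltnP k n) => [k_lt_n|]; last by move/pmem_out->.
  have -> : k.+1 = n by apply/eqP; rewrite eqn_leq nk k_lt_n.
  by rewrite odd_fence_n_divn.
have k_lt_n : k < n by apply: ltnW.
move=> fall; rewrite (pmem_ord I (Ordinal kn)) (pmem_ord I (Ordinal k_lt_n)).
by apply: ideal_cover; rewrite // fence_cover_nseq /= eqxx fall orbT.
Qed.

Lemma in_max_nseq (q : P) : in_max I q =
  [&& pmem I q.+1, odd (q %/ a) ==> ~~ pmem I q & ~~ odd (q.+1 %/ a) ==> ~~ pmem I q.+2].
Proof.
rewrite in_maxE // -pmem_ord; congr (_ && _).
apply/forallP/andP => [upq|[down up] v].
- split; apply/implyP => slope; apply/negP.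
    case E: (nat_of_ord q) slope => [|k]; first by rewrite div0n.
    move=> fall /existsP[w /andP[/eqP wk wI]].
    by have := upq w; rewrite fence_cover_nseq wk E eqxx fall orbT wI.
  move=> /existsP[w /andP[/eqP wq wI]].
  by have := upq w; rewrite fence_cover_nseq wq eqxx slope wI.
- rewrite fence_cover_nseq -pmem_ord; apply/implyP => /orP[]/andP[/eqP qv slope].
    by rewrite -qv; apply: (implyP up).
  by rewrite qv; apply: (implyP down); rewrite -qv.
Qed.

Lemma in_min_compl_nseq (q : P) : in_min_compl I q =
  [&& ~~ pmem I q.+1, ~~ odd (q %/ a) ==> pmem I q & odd (q.+1 %/ a) ==> pmem I q.+2].
Proof.
rewrite in_min_complE // -pmem_ord; congr (_ && _).
apply/forallP/andP => [lowq|[down up] u].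
- split; apply/implyP => slope.
    case E: (nat_of_ord q) slope => [|k] // rise.
    have k_lt_n : k < n by apply: ltnW; rewrite -E.
    rewrite (pmem_ord I (Ordinal k_lt_n)); apply: (implyP (lowq _)).
    by rewrite fence_cover_nseq /= E eqxx rise.
  have qn : q.+1 < n.
    rewrite ltn_neqAle ltn_ord andbT; apply: contraTneq slope => ->.
    by rewrite odd_fence_n_divn.
  rewrite (pmem_ord I (Ordinal qn)); apply: (implyP (lowq _)).
  by rewrite fence_cover_nseq /= eqxx slope orbT.
- rewrite fence_cover_nseq -pmem_ord; apply/implyP => /orP[]/andP[/eqP uq slope].
    by rewrite uq; apply: (implyP down); rewrite -uq.
  by rewrite -uq; apply: (implyP up).
Qed.

End Ideal.
End UniformFence.

Local Open Scope ring_scope.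

Section ToggleAlgebra.
Variable R : comPzRingType.

(* The summand at x_k, k = q + 1: [e] is the parity of q %/ a, [A] says that x_k is a
   peak or a valley, [b0 b1 b2] are the padded memberships of x_(k-1), x_k, x_(k+1),
   and [d - a [A && e]] is the coefficient of T_(x_k). *)
Lemma toggle_summand_cases (e A b0 b1 b2 : bool) (a d : R) :
  (A -> d = 0) ->
  (~~ e -> b1 -> b0) -> (e -> b0 -> b1) ->
  (~~ (A (+) e) -> b2 -> b1) -> (A (+) e -> b1 -> b2) ->
  let mx := [&& b1, e ==> ~~ b0 & ~~ (A (+) e) ==> ~~ b2] in
  let mn := [&& ~~ b1, ~~ e ==> b0 & A (+) e ==> b2] in
  let ch : R := if mx then 1 else 0 in
  b1%:R - a * ((if A && ~~ e then ch else 0) - (if A && e then ch else 0))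
    - (d - a * (A && e)%:R) * (if mn then 1 else if mx then -1 else 0)
  = b1%:R * (1 - a * A%:R) - d * (b0%:R - 2 * b1%:R + b2%:R) + a * (A && e)%:R.
Proof.
move=> d0 rise0 fall0 rise1 fall1 /=.
case: A d0 rise1 fall1 => [/(_ isT)->|_] rise1 fall1;
  move: rise0 fall0 rise1 fall1; case: e; case: b0; case: b1; case: b2 => //= r0 f0 r1 f1;
  first [ring | by have := r0 isT isT | by have := f0 isT isT
        | by have := r1 isT isT | by have := f1 isT isT].
Qed.

Lemma summation_by_parts2 (f g : nat -> R) m :
  \sum_(k < m) g k.+1 * (f k - 2 * f k.+1 + f k.+2) =
  \sum_(k < m) f k.+1 * (g k - 2 * g k.+1 + g k.+2)
  + g 1%N * f 0%N - g 0%N * f 1%N + g m * f m.+1 - g m.+1 * f m.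
Proof.
elim: m => [|m IH]; first by rewrite !big_ord0; ring.
by rewrite !big_ord_recr /= IH; ring.
Qed.

End ToggleAlgebra.

Section ResidueParabola.
Variable R : numFieldType.

Definition qmod (a j : nat) : R := ((j %% a)%:R * ((j %% a)%:R - a%:R)) / 2.

Lemma qmod_dvd a j : (a %| j)%N -> qmod a j = 0.
Proof. by move=> /eqP dvd_j; rewrite /qmod dvd_j !mul0r. Qed.

Lemma qmod_second_diff a k : (0 < a)%N ->
  qmod a k - 2 * qmod a k.+1 + qmod a k.+2 = 1 - a%:R * (a %| k.+1)%N%:R.
Proof.
move=> a_gt0; rewrite /qmod (modnS k.+1) modnS.
case: (boolP (a %| k.+1)%N) => dvd1; case: (boolP (a %| k.+2)%N) => dvd2 /=.
- have a1 : a = 1%N by apply/eqP; rewrite -dvdn1 -(subSnn k.+1) dvdn_sub.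
  by rewrite a1 modn1; field.
- move: (k %% a)%N (succ_modn_dvd a_gt0 dvd1) => r <-.
  by rewrite -!natr1; field.
- move: (succ_modn_dvd a_gt0 dvd2); rewrite modnS (negPf dvd1).
  by move: (k %% a)%N => r <-; rewrite -!natr1; field.
- by rewrite -!natr1; field.
Qed.

End ResidueParabola.

Section ToggleSum.
Variable R : realType.
Variables a t : nat.
Hypotheses (a_gt1 : (1 < a)%N) (t_odd : odd t).
Let a_gt0 : (0 < a)%N := ltnW a_gt1.
Local Notation n := (fence_n (nseq t a)).
Local Notation P := 'I_n.

Lemma toggle_summand_nseq (I : {set P}) (q : P) : is_ideal I ->
  chi_hat R q I
    - a%:R * ((if is_peak q then chi R q I else 0) - (if is_valley q then chi R q I else 0))
    - (qmod R a q.+1 - a%:R * (is_valley q)%:R) * toggle R q I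
  = (pmem I q.+1)%:R * (1 - a%:R * (a %| q.+1)%N%:R)
    - qmod R a q.+1 * ((pmem I q)%:R - 2 * (pmem I q.+1)%:R + (pmem I q.+2)%:R)
    + a%:R * (is_valley q)%:R.
Proof.
move=> idI.
have -> : chi_hat R q I = (pmem I q.+1)%:R by rewrite /chi_hat pmem_ord; case: (q \in I).
rewrite /chi /toggle in_max_nseq // in_min_compl_nseq // is_peak_nseq // is_valley_nseq //.
rewrite odd_divnS //; apply: toggle_summand_cases; first exact: qmod_dvd.
- exact: pmem_rise.
- exact: pmem_fall.
- by rewrite -odd_divnS //; apply: pmem_rise.
- by rewrite -odd_divnS //; apply: pmem_fall.
Qed.

Lemma sum_valley_nseq : \sum_(q : P) (is_valley q)%:R = (t./2)%:R :> R.
Proof.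
rewrite -natr_sum; under eq_bigr do rewrite is_valley_nseq //.
rewrite sum_even_multiples // fence_n_divn //.
by case: t t_odd => //= s /negPf s_even; rewrite uphalf_half s_even.
Qed.

Lemma sum_toggle_summand_nseq (I : {set P}) : is_ideal I ->
  \sum_(q : P) ((pmem I q.+1)%:R * (1 - a%:R * (a %| q.+1)%N%:R)
    - qmod R a q.+1 * ((pmem I q)%:R - 2 * (pmem I q.+1)%:R + (pmem I q.+2)%:R)
    + a%:R * (is_valley q)%:R) = n%:R / 2.
Proof.
move=> idI.
have second_diff (k : P) :
    (pmem I k.+1)%:R * (qmod R a k - 2 * qmod R a k.+1 + qmod R a k.+2) =
    (pmem I k.+1)%:R * (1 - a%:R * (a %| k.+1)%N%:R).
  by rewrite qmod_second_diff.
have by_parts := summation_by_parts2 (fun k => (pmem I k)%:R) (qmod R a) n.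
cbv beta in by_parts.
rewrite big_split sumrB /= by_parts (eq_bigr _ (fun k _ => second_diff k)).
rewrite -mulr_sumr sum_valley_nseq.
have ta_gt0 : (0 < t * a)%N by rewrite muln_gt0 a_gt0 andbT; case: t t_odd.
have qmod0 : qmod R a 0 = 0 by rewrite qmod_dvd ?dvdn0.
have qmod_top : qmod R a n.+1 = 0 by rewrite qmod_dvd // fence_n_nseq prednK // dvdn_mull.
have qmod1 : qmod R a 1 = (1 - a%:R) / 2 by rewrite /qmod modn_small // mul1r.
have half_t : (t./2)%:R = (t%:R - 1) / 2 :> R.
  by rewrite -[t in RHS]odd_double_half t_odd natrD -muln2 natrM /=; field.
have n_eq : n%:R = t%:R * a%:R - 1 :> R.
  by rewrite fence_n_nseq -natrM -[in RHS](prednK ta_gt0) -natr1 addrK.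
have -> : pmem I 0 by [].
rewrite qmod0 qmod_top qmod1 (pmem_out I (leqnn n)) half_t n_eq /=.
by field.
Qed.

End ToggleSum.

Theorem theorem5p3 (R : realType) (a t : nat) :
  (2 <= a)%N -> (3 <= t)%N -> odd t ->
  @toggle_equiv R (nseq t a)
    (fun I => \sum_q chi_hat R q I)
    (fun I => (fence_n (nseq t a))%:R / 2
       + a%:R * (\sum_(p | is_peak p) chi R p I - \sum_(v | is_valley v) chi R v I)).
Proof.
move=> a_gt1 _ t_odd.
exists (fun q : 'I_(fence_n (nseq t a)) => qmod R a q.+1 - a%:R * (is_valley q)%:R) => I idI.
have := sum_toggle_summand_nseq R a_gt1 t_odd idI.
under eq_bigr do rewrite -toggle_summand_nseq //.
move=> <-; rewrite (big_mkcond (@is_peak _)) (big_mkcond (@is_valley _)) -sumrB mulr_sumr !sumrB.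
ring.
Qed.
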